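(* Let $(\mathcal V,\mathcal W,\lambda)$ be a FTvN system. Then it comes from a normal decomposition system if and only if it is orbit-transitive, $\mathcal W\subseteq\mathcal V$, and $\lambda^2=\lambda$.
   Context: A Fan-Theobald-von Neumann (FTvN) system is a triple $(\mathcal V,\mathcal W,\lambda)$ where $\mathcal V,\mathcal W$ are real inner product spaces and $\lambda:\mathcal V\to\mathcal W$ is a map such that: (A1) $\|\lambda(x)\|=\|x\|$ for all $x$; (A2) $\langle x,y\rangle\le\langle\lambda(x),\lambda(y)\rangle$ for all $x,y$; (A3) for every $c\in\mathcal V$ and $q\in\lambda(\mathcal V)$ there exists $x$ with $\lambda(x)=q$ and $\langle c,x\rangle=\langle\lambda(c),\lambda(x)\rangle$. An automorphism of the system is an invertible linear map $A:\mathcal V\to\mathcal V$ with $\lambda(Ax)=\lambda(x)$ for all $x$; the set of automorphisms is $\operatorname{Aut}(\mathcal V,\mathcal W,\lambda)$ (a closed subgroup of the orthogonal group $\mathcal O(\mathcal V)$). The system is orbit-transitive if whenever $x,y\in\mathcal V$ with $\lambda(x)=\lambda(y)$ there is $A\in\operatorname{Aut}(\mathcal V,\mathcal W,\lambda)$ with $y=Ax$. A normal decomposition system (NDS) is a triple $(\mathcal V,\mathcal G,\gamma)$ with $\mathcal V$ a real inner product space, $\mathcal G$ a closed subgroup of $\mathcal O(\mathcal V)$ and $\gamma:\mathcal V\to\mathcal V$ such that (a) $\gamma(Ax)=\gamma(x)$ for all $x\in\mathcal V$, $A\in\mathcal G$; (b) for each $x$ there is $A\in\mathcal G$ with $x=A\gamma(x)$;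 (c) $\langle x,y\rangle\le\langle\gamma(x),\gamma(y)\rangle$ for all $x,y$. An NDS $(\mathcal V,\mathcal G,\gamma)$ yields the FTvN system $(\mathcal V,\operatorname{span}(\gamma(\mathcal V)),\gamma)$. The FTvN system $(\mathcal V,\mathcal W,\lambda)$ is said to come from an NDS if $\mathcal W$ is a linear subspace of $\mathcal V$ with the induced inner product and there is a closed subgroup $\mathcal G$ of $\mathcal O(\mathcal V)$ such that $(\mathcal V,\mathcal G,\lambda)$ is an NDS (viewing $\lambda$ as a map into $\mathcal V$). *)

From HB Require Import structures.
From mathcomp Require Import all_boot all_order all_algebra.
From mathcomp Require Import reals.
Set Implicit Arguments. Unset Strict Implicit. Unset Printing Implicit Defensive.
Import Order.TTheory GRing.Theory Num.Theory.
Local Open Scope ring_scope.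

Section Defs.
Variable R : realType.

Definition is_inner_product (V : lmodType R) (ip : V -> V -> R) : Prop :=
  [/\ forall x y, ip x y = ip y x,
      forall (a : R) (x y z : V), ip (a *: x + y) z = a * ip x z + ip y z
    & forall x : V, x != 0 -> 0 < ip x x].

Definition ipnorm (V : lmodType R) (ip : V -> V -> R) (x : V) : R :=
  Num.sqrt (ip x x).

Definition is_linear_map (V U : lmodType R) (f : V -> U) : Prop :=
  forall (a : R) (x y : V), f (a *: x + y) = a *: f x + f y.

Definition FTvN (V W : lmodType R) (ipV : V -> V -> R) (ipW : W -> W -> R)
    (lam : V -> W) : Prop :=
  [/\ (* A1 *) forall x, ipnorm ipW (lam x) = ipnorm ipV x,
      (* A2 *) forall x y, ipV x y <= ipW (lam x) (lam y)
    & (* A3 *) forall (c : V) (q : W), (exists v, lam v = q) ->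
         exists x, lam x = q /\ ipV c x = ipW (lam c) (lam x)].

Definition is_automorphism (V W : lmodType R) (lam : V -> W) (A : V -> V) : Prop :=
  [/\ is_linear_map A, bijective A & forall x, lam (A x) = lam x].

Definition orbit_transitive (V W : lmodType R) (lam : V -> W) : Prop :=
  forall x y : V, lam x = lam y ->
    exists A, is_automorphism lam A /\ y = A x.

Definition is_orthogonal (V : lmodType R) (ip : V -> V -> R) (A : V -> V) : Prop :=
  [/\ is_linear_map A, bijective A & forall x y, ip (A x) (A y) = ip x y].

(* Topological closedness of a set G of operators in O(V): since V is
   finite dimensional, the topology of O(V) is that of pointwise convergence
   (equivalently, operator-norm convergence), which is metrizable, so closed
   = sequentially closed. *)
Definition op_closed (V : lmodType R) (ip : V -> V -> R) (G : (V -> V) -> Prop) : Prop :=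
  forall (An : nat -> V -> V) (A : V -> V),
    (forall n, G (An n)) ->
    (forall x, forall e : R, 0 < e -> exists N : nat, forall n, (N <= n)%N ->
         ipnorm ip (An n x - A x) < e) ->
    G A.

Definition closed_subgroup_of_O (V : lmodType R) (ip : V -> V -> R)
    (G : (V -> V) -> Prop) : Prop :=
  [/\ forall A, G A -> is_orthogonal ip A,
      G id,
      forall A B, G A -> G B -> G (A \o B),
      forall A, G A -> exists B, [/\ G B, cancel A B & cancel B A]
    & op_closed ip G].

Definition NDS (V : lmodType R) (ip : V -> V -> R) (G : (V -> V) -> Prop)
    (gamma : V -> V) : Prop :=
  [/\ closed_subgroup_of_O ip G,
      (* a *) forall x A, G A -> gamma (A x) = gamma x,
      (* b *) forall x, exists A, G A /\ x = A (gamma x)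
    & (* c *) forall x y, ip x y <= ip (gamma x) (gamma y)].

(* "W is a linear subspace of V with the induced inner product":
   W is identified with its image under a linear map iota : W -> V
   preserving the inner product (hence injective). *)
Definition subspace_embedding (V W : lmodType R) (ipV : V -> V -> R)
    (ipW : W -> W -> R) (iota : W -> V) : Prop :=
  is_linear_map iota /\ forall u v, ipV (iota u) (iota v) = ipW u v.

Definition comes_from_NDS (V W : lmodType R) (ipV : V -> V -> R)
    (ipW : W -> W -> R) (lam : V -> W) : Prop :=
  exists iota : W -> V, subspace_embedding ipV ipW iota /\
    exists G, NDS ipV G (iota \o lam).

End Defs.

From Pilot Require Import Defs.
From HB Require Import structures.
From mathcomp Require Import all_boot all_order all_algebra.
From mathcomp Require Import reals.
From mathcomp Require Import ring lra.
Import Order.TTheory GRing.Theory Num.Theory.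
Local Open Scope ring_scope.
Set Implicit Arguments. Unset Strict Implicit.

(** If [iota \o lam] is the map of an NDS with group [G], it is idempotent
    ([x = A (gamma x)] gives [gamma x = gamma (gamma x)]), and [gamma x = gamma y]
    with [x = A (gamma x)], [y = B (gamma y)] gives [y = (B \o A^-1) x]; as [iota]
    is injective, [G] acts by automorphisms, so the system is orbit-transitive.
    Conversely take [G] = Aut(V, W, lam). By (A1) its elements are isometries and
    by (A1)-(A2) [lam] is nonexpansive, which makes [G] closed; axiom (b) is
    orbit-transitivity applied to [x] and [iota (lam x)], which have the same
    image under [lam] by idempotency, and axiom (c) is (A2). *)

Section InnerProduct.
Variables (R : realType) (V : lmodType R) (ip : V -> V -> R).
Hypothesis ip_inner : is_inner_product ip.

Lemma ipC x y : ip x y = ip y x.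
Proof. by case: ip_inner. Qed.

Lemma ip0l z : ip 0 z = 0.
Proof.
case: ip_inner => _ ipL _; have := ipL 1 0 0 z.
rewrite scaler0 addr0 mul1r; lra.
Qed.

Lemma ipZl a x z : ip (a *: x) z = a * ip x z.
Proof. by case: ip_inner => _ ipL _; rewrite -[a *: x]addr0 ipL ip0l addr0. Qed.

Lemma ipDl x y z : ip (x + y) z = ip x z + ip y z.
Proof. by case: ip_inner => _ ipL _; rewrite -[x in LHS]scale1r ipL mul1r. Qed.

Lemma ipNl x z : ip (- x) z = - ip x z.
Proof. by rewrite -scaleN1r ipZl mulN1r. Qed.

Lemma ipBl x y z : ip (x - y) z = ip x z - ip y z.
Proof. by rewrite ipDl ipNl. Qed.

Lemma ipZr a x z : ip z (a *: x) = a * ip z x.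
Proof. by rewrite ipC ipZl ipC. Qed.

Lemma ipDr x y z : ip z (x + y) = ip z x + ip z y.
Proof. by rewrite ipC ipDl !(ipC z). Qed.

Lemma ipNr x z : ip z (- x) = - ip z x.
Proof. by rewrite ipC ipNl ipC. Qed.

Lemma ipBr x y z : ip z (x - y) = ip z x - ip z y.
Proof. by rewrite ipDr ipNr. Qed.

Lemma ipxx_ge0 x : 0 <= ip x x.
Proof.
have [->|x_neq0] := eqVneq x 0; first by rewrite ip0l.
by case: ip_inner => _ _ /(_ x x_neq0) /ltW.
Qed.

Lemma ipxx_le0 x : ip x x <= 0 -> x = 0.
Proof.
move=> le0; apply/eqP; apply: contraTT le0 => x_neq0.
by case: ip_inner => _ _ /(_ x x_neq0); rewrite -ltNge.
Qed.

Lemma ipxx_DD x y : ip (x + y) (x + y) = ip x x + 2 * ip x y + ip y y.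
Proof. by rewrite !ipDl !ipDr (ipC y x); ring. Qed.

Lemma ipxx_D_le x y : ip (x + y) (x + y) <= 2 * ip x x + 2 * ip y y.
Proof.
have := ipxx_ge0 (x - y); rewrite !ipBl !ipBr ipxx_DD (ipC y x); lra.
Qed.

Definition ip_cvg (u : nat -> V) (v : V) : Prop :=
  forall e, 0 < e -> exists N, forall n, (N <= n)%N -> ip (u n - v) (u n - v) < e.

Lemma ipnorm_cvg (u : nat -> V) v :
  (forall e, 0 < e -> exists N, forall n, (N <= n)%N -> ipnorm ip (u n - v) < e) ->
  ip_cvg u v.
Proof.
move=> cvg_u e e_gt0; have [|N uN] := cvg_u (Num.sqrt e); first by rewrite sqrtr_gt0.
by exists N => n /uN; rewrite /ipnorm ltr_sqrt.
Qed.

Lemma eq_ip_cvg (u v : nat -> V) a : u =1 v -> ip_cvg u a -> ip_cvg v a.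
Proof. by move=> uv ua e /ua[N uN]; exists N => n; rewrite -uv; apply: uN. Qed.

Lemma ip_cvg_cst v : ip_cvg (fun=> v) v.
Proof. by move=> e e_gt0; exists 0%N => n _; rewrite subrr ip0l. Qed.

Lemma ip_cvg_unique u a b : ip_cvg u a -> ip_cvg u b -> a = b.
Proof.
move=> ua ub; apply/eqP; rewrite -subr_eq0; apply/eqP/ipxx_le0.
apply/ler_addgt0Pr => e e_gt0; rewrite add0r.
have e4_gt0 : 0 < e / 4 by rewrite divr_gt0.
have [[Na uNa] [Nb uNb]] := (ua _ e4_gt0, ub _ e4_gt0).
pose n := maxn Na Nb.
have ab : a - b = (u n - b) + - (u n - a) by rewrite opprB [RHS]addrC addrA subrK.
have := uNa n (leq_maxl _ _); have := uNb n (leq_maxr _ _).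
have := ipxx_D_le (u n - b) (- (u n - a)); rewrite -ab ipNl ipNr opprK.
lra.
Qed.

Lemma ip_cvgZD c u v a b :
  ip_cvg u a -> ip_cvg v b -> ip_cvg (fun n => c *: u n + v n) (c *: a + b).
Proof.
move=> ua vb e e_gt0; have k_gt0 : 0 < 2 * c ^+ 2 + 2 by have := sqr_ge0 c; lra.
pose d := e / (2 * c ^+ 2 + 2).
have d_gt0 : 0 < d by rewrite divr_gt0.
have de : d * (2 * c ^+ 2 + 2) = e by rewrite divfK ?gt_eqF.
have [[Na uNa] [Nb vNb]] := (ua _ d_gt0, vb _ d_gt0).
exists (maxn Na Nb) => n; rewrite geq_max => /andP[/uNa un /vNb vn].
have -> : c *: u n + v n - (c *: a + b) = c *: (u n - a) + (v n - b).
  by rewrite scalerBr opprD addrACA.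
have := ipxx_D_le (c *: (u n - a)) (v n - b); rewrite ipZl ipZr mulrA -expr2.
have : c ^+ 2 * ip (u n - a) (u n - a) <= c ^+ 2 * d.
  by rewrite ler_wpM2l ?sqr_ge0 ?ltW.
nra.
Qed.

End InnerProduct.

Lemma ip_cvg_nonexpansive (R : realType) (V W : lmodType R)
    (ipV : V -> V -> R) (ipW : W -> W -> R) (f : V -> W) u v :
  (forall x y, ipW (f x - f y) (f x - f y) <= ipV (x - y) (x - y)) ->
  ip_cvg ipV u v -> ip_cvg ipW (f \o u) (f v).
Proof.
move=> f_nonexp uv e /uv[N uN]; exists N => n /uN.
exact/le_lt_trans/f_nonexp.
Qed.

Section LinearMaps.
Variable R : realType.

Lemma linear_mapB (V U : lmodType R) (f : V -> U) :
  is_linear_map f -> forall x y, f (x - y) = f x - f y.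
Proof. by move=> f_lin x y; rewrite -scaleN1r addrC f_lin scaleN1r addrC. Qed.

Lemma linear_mapD (V U : lmodType R) (f : V -> U) :
  is_linear_map f -> forall x y, f (x + y) = f x + f y.
Proof. by move=> f_lin x y; have := f_lin 1 x y; rewrite !scale1r. Qed.

Lemma subspace_embedding_inj (V W : lmodType R) ipV ipW (iota : W -> V) :
  is_inner_product ipV -> is_inner_product ipW ->
  subspace_embedding ipV ipW iota -> injective iota.
Proof.
move=> HV HW [iota_lin iota_iso] u v e; apply/eqP; rewrite -subr_eq0; apply/eqP.
apply: (ipxx_le0 HW); rewrite -iota_iso linear_mapB // e subrr ip0l //.
Qed.

Lemma linear_inj_bijective (V : vectType R) (A : V -> V) :
  is_linear_map A -> injective A -> bijective A.
Proof.
move=> A_lin A_inj.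
pose AL : {linear V -> V} := HB.pack A (GRing.isLinear.Build R V V *:%R A A_lin).
have ker0 : lker (linfun AL) == 0%VS.
  by apply/lker0P => x y; rewrite !lfunE; apply: A_inj.
exists ((linfun AL)^-1)%VF => x; last by have := lker0_lfunVK ker0 x; rewrite lfunE.
by apply: A_inj; have := lker0_lfunVK ker0 (A x); rewrite lfunE.
Qed.

Lemma linear_isometry_orthogonal (V : lmodType R) (ip : V -> V -> R) (A : V -> V) :
  is_inner_product ip -> is_linear_map A -> bijective A ->
  (forall x, ip (A x) (A x) = ip x x) -> Defs.is_orthogonal ip A.
Proof.
move=> Hip A_lin A_bij A_iso; split=> // x y.
have := A_iso (x + y); rewrite linear_mapD // !(ipxx_DD Hip) !A_iso.
lra.
Qed.

End LinearMaps.

Section NormalDecomposition.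
Variables (R : realType) (V : lmodType R) (ip : V -> V -> R).
Variables (G : (V -> V) -> Prop) (gamma : V -> V).
Hypothesis nds : NDS ip G gamma.

Lemma NDS_idem x : gamma (gamma x) = gamma x.
Proof.
case: nds => _ gammaG decomp _; have [A [GA xE]] := decomp x.
by rewrite [in RHS]xE (gammaG _ _ GA).
Qed.

Lemma NDS_orbit x y : gamma x = gamma y -> exists2 A, G A & y = A x.
Proof.
case: nds => [[_ _ Gcomp Ginv _] _ decomp _] gxy.
have [[A [GA xE]] [B [GB yE]]] := (decomp x, decomp y).
have [Ainv [GAinv AK _]] := Ginv A GA.
by exists (B \o Ainv); [exact: Gcomp | rewrite /= {1}xE AK gxy -yE].
Qed.

End NormalDecomposition.

Section Automorphisms.
Variables (R : realType) (V : vectType R) (W : lmodType R).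
Variables (ipV : V -> V -> R) (ipW : W -> W -> R) (lam : V -> W).
Hypotheses (HV : is_inner_product ipV) (HW : is_inner_product ipW).
Hypothesis lam_norm : forall x, ipnorm ipW (lam x) = ipnorm ipV x.
Hypothesis lam_ip : forall x y, ipV x y <= ipW (lam x) (lam y).

Lemma lam_sqnorm x : ipW (lam x) (lam x) = ipV x x.
Proof.
by apply/eqP; rewrite -eqr_sqrt ?ipxx_ge0 //; apply/eqP/lam_norm.
Qed.

Lemma lam_nonexpansive x y :
  ipW (lam x - lam y) (lam x - lam y) <= ipV (x - y) (x - y).
Proof.
rewrite !(ipBl HW) !(ipBr HW) !(ipBl HV) !(ipBr HV) !lam_sqnorm.
by rewrite (ipC HW (lam y)) (ipC HV y); have := lam_ip x y; lra.
Qed.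

Lemma automorphism_orthogonal A : is_automorphism lam A -> Defs.is_orthogonal ipV A.
Proof.
case=> A_lin A_bij lamA; apply: linear_isometry_orthogonal => // x.
by rewrite -lam_sqnorm lamA lam_sqnorm.
Qed.

Lemma automorphism_comp A B :
  is_automorphism lam A -> is_automorphism lam B -> is_automorphism lam (A \o B).
Proof.
move=> [A_lin A_bij lamA] [B_lin B_bij lamB]; split; last by move=> x /=; rewrite lamA.
- by move=> a x y /=; rewrite B_lin A_lin.
- exact: bij_comp.
Qed.

Lemma automorphism_inv A :
  is_automorphism lam A -> exists B, [/\ is_automorphism lam B, cancel A B & cancel B A].
Proof.
move=> [A_lin [B AK BK] lamA]; exists B; split=> //; split.
- by move=> a x y; apply: (can_inj AK); rewrite A_lin !BK.
- by exists A.
- by move=> x; rewrite -[in RHS](BK x) lamA.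
Qed.

(** Pointwise limits stay linear, and stay [lam]-invariant because [lam] is
    nonexpansive; they are then isometric, hence injective, hence invertible
    since [V] is finite dimensional. *)
Lemma automorphism_closed : op_closed ipV (is_automorphism lam).
Proof.
move=> An A autAn cvgAn; have cvgA x := ipnorm_cvg (cvgAn x).
have lamA x : lam (A x) = lam x.
  apply: (ip_cvg_unique HW (ip_cvg_nonexpansive lam_nonexpansive (cvgA x))).
  apply: (eq_ip_cvg _ (ip_cvg_cst HW (lam x))) => n /=.
  by case: (autAn n) => _ _ ->.
have A_lin : is_linear_map A.
  move=> a x y; apply: (ip_cvg_unique HV (cvgA (a *: x + y))).
  apply: (eq_ip_cvg _ (ip_cvgZD HV a (cvgA x) (cvgA y))) => n.
  by case: (autAn n) => ->.
split=> //; apply: linear_inj_bijective => // x y Axy.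
apply/eqP; rewrite -subr_eq0; apply/eqP/(ipxx_le0 HV).
by rewrite -lam_sqnorm -lamA linear_mapB // Axy subrr lam_sqnorm ip0l.
Qed.

Lemma automorphism_closed_subgroup : closed_subgroup_of_O ipV (is_automorphism lam).
Proof.
split.
- exact: automorphism_orthogonal.
- by split=> //; exists id.
- exact: automorphism_comp.
- exact: automorphism_inv.
- exact: automorphism_closed.
Qed.

End Automorphisms.

Theorem theorem7p3 (R : realType) (V : vectType R) (W : lmodType R)
    (ipV : V -> V -> R) (ipW : W -> W -> R) (lam : V -> W) :
  is_inner_product ipV -> is_inner_product ipW ->
  FTvN ipV ipW lam ->
  (comes_from_NDS ipV ipW lam <->
   orbit_transitive lam /\
   exists iota : W -> V, subspace_embedding ipV ipW iota /\
     (* lam^2 = lam, with W viewed inside V via iota *)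
     forall x, lam (iota (lam x)) = lam x).
Proof.
move=> HV HW [lam_norm lam_ip _]; split.
- case=> iota [emb [G nds]]; have iota_inj := subspace_embedding_inj HV HW emb.
  split; last by exists iota; split=> // x; apply: iota_inj; apply: (NDS_idem nds).
  move=> x y /(congr1 iota) /(NDS_orbit nds) [A GA ->]; exists A; split=> //.
  case: nds => [[/(_ A GA) [A_lin A_bij _] _ _ _ _] gammaG _ _]; split=> // z.
  exact/iota_inj/gammaG.
- case=> orbit [iota [emb lam_idem]]; exists iota; split=> //.
  exists (is_automorphism lam); split.
  + exact: automorphism_closed_subgroup HV HW lam_norm lam_ip.
  + by move=> x A [_ _ lamA] /=; rewrite lamA.
  + by move=> x; apply: orbit; rewrite lam_idem.
  + by move=> x y /=; case: emb => _ ->; apply: lam_ip.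
Qed.
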